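(* Let $t\geq 4$ be an even integer and let $a,b,c$ be positive integers with $a\geq 2$ and $a+b=t-1$. Then the multiset $\{1^a,2^b,t^c\}$ admits a linear realization.
   Context: $\{1^a,2^b,t^{c}\}$ is the multiset with $a$ copies of $1$, $b$ copies of $2$ and $c$ copies of $t$. For a multiset $L$ of positive integers with $|L|=v-1$, each at most $v-1$, a linear realization of $L$ is a Hamiltonian path $[x_0,\dots,x_{v-1}]$ of the complete graph on $\{0,\dots,v-1\}$ such that the multiset $\{|x_i-x_{i+1}| : i=0,\dots,v-2\}$ equals $L$. *)

From mathcomp Require Import all_boot.

Definition absdiff (m n : nat) : nat := (m - n) + (n - m).

Definition diffs (s : seq nat) : seq nat :=
  match s with
  | [::] => [::]
  | x :: s' => pairmap absdiff x s'
  end.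

(* s is a linear realization of the multiset L (given as a list,
   compared up to permutation) on the vertex set {0,...,v-1},
   where v = size L + 1: s lists every vertex exactly once
   (Hamiltonian path of K_v) and its edge lengths form L. *)
Definition linear_realization (L : seq nat) (s : seq nat) : Prop :=
  perm_eq s (iota 0 (size L).+1) /\ perm_eq (diffs s) L.

Definition ms12t (a b t c : nat) : seq nat := nseq a 1 ++ nseq b 2 ++ nseq c t.

From mathcomp Require Import all_boot zify.

(* Write the vertices 0, ..., v-1 in t columns by residue mod t and traverse the
   columns one after the other, alternately upwards and downwards.  Inside the
   columns this uses v - t = c edges of length t.  A move between two columns
   r, r' has length |r - r'| when it is made at the bottom, and also when it is
   made at the top of two columns of equal height.  The columns of residue
   r < v mod t are one longer than the others, so we visit the residues
   >= v mod t first and cross to the taller columns at the bottom.  It remains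
   to find a Hamiltonian path on the residues [0, t) of this shape whose steps
   are a ones and b twos; it is glued from a path on [v mod t, t) and a
   mirrored path on [0, v mod t), each a run of ones followed by a zigzag
   0, 2, 4, ..., 5, 3, 1. *)

Lemma absdiffC m n : absdiff m n = absdiff n m.
Proof. by rewrite /absdiff addnC. Qed.

Lemma absdiffDl k m n : absdiff (k + m) (k + n) = absdiff m n.
Proof. by rewrite /absdiff !subnDl. Qed.

Lemma absdiffDr k m n : absdiff (m + k) (n + k) = absdiff m n.
Proof. by rewrite ![_ + k]addnC absdiffDl. Qed.

Lemma diffs_cons x y s : diffs [:: x, y & s] = absdiff x y :: diffs (y :: s).
Proof. by []. Qed.

Lemma diffs_cat s1 s2 : s1 != [::] -> s2 != [::] ->
  diffs (s1 ++ s2) = diffs s1 ++ absdiff (last 0 s1) (head 0 s2) :: diffs s2.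
Proof. by case: s1 => [|x s1] // _; case: s2 => [|y s2] // _; rewrite /= pairmap_cat. Qed.

Lemma diffs_map_addn k s : diffs (map (addn k) s) = diffs s.
Proof. by case: s => // x s; elim: s x => //= y s IHs x; rewrite absdiffDl IHs. Qed.

Lemma diffs_map_subn k s : all (fun x => x <= k) s -> diffs (map (subn k) s) = diffs s.
Proof.
case: s => // x s; elim: s x => //= y s IHs x /and3P[le_xk le_yk le_sk].
by rewrite IHs ?le_yk //; congr (_ :: _); rewrite /absdiff; lia.
Qed.

Lemma diffs_rev s : diffs (rev s) = rev (diffs s).
Proof.
elim: s => // x [|y s] IHs //.
rewrite rev_cons -cats1 diffs_cat ?IHs -?size_eq0 ?size_rev //.
by rewrite cats1 rev_cons last_rcons absdiffC diffs_cons rev_cons.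
Qed.

Definition ms12 p q := nseq p 1 ++ nseq q 2.

Lemma perm_ms12_cons1 p q L : perm_eq L (ms12 p q) -> perm_eq (1 :: L) (ms12 p.+1 q).
Proof. by rewrite perm_cons. Qed.

Lemma perm_ms12_cons2 p q L : perm_eq L (ms12 p q) -> perm_eq (2 :: L) (ms12 p q.+1).
Proof. by rewrite /ms12 -(perm_cons 2) => /permPl->; rewrite -cat1s perm_catCA. Qed.

Lemma perm_ms12_cat p q p' q' L L' : perm_eq L (ms12 p q) -> perm_eq L' (ms12 p' q') ->
  perm_eq (L ++ L') (ms12 (p + p') (q + q')).
Proof.
move=> dL dL'; apply: perm_trans (perm_cat dL dL') _.
by rewrite /ms12 !nseqD -!catA perm_cat2l perm_catCA.
Qed.

Lemma iota0S n : iota 0 n.+1 = 0 :: map (addn 1) (iota 0 n).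
Proof. by rewrite -iotaDl. Qed.

(* zigzag n = [:: 0; 2; 4; ...; 5; 3; 1] *)
Fixpoint zigzag n := if n is n'.+1 then 0 :: map (addn 1) (rev (zigzag n')) else [::].

Lemma zigzagS n : zigzag n.+1 = 0 :: map (addn 1) (rev (zigzag n)).
Proof. by []. Qed.

Lemma perm_zigzag n : perm_eq (zigzag n) (iota 0 n).
Proof. by elim: n => // n IHn; rewrite zigzagS iota0S perm_cons perm_map // perm_rev. Qed.

Lemma zigzag_ends_diffs n : 1 < n ->
  exists2 w, zigzag n = rcons (0 :: w) 1 & perm_eq (diffs (zigzag n)) (ms12 1 (n - 2)).
Proof.
elim: n => [|[|n] IHn] // _; case: n IHn => [|n] IHn; first by exists [::].
have [w zw dw] := IHn isT.
rewrite zigzagS zw rev_rcons map_cons.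
exists (2 :: map (addn 1) (rev w)); first by rewrite rev_cons map_rcons.
rewrite !subSS subn0 in dw *; rewrite diffs_cons; apply: perm_ms12_cons2.
rewrite -map_cons -rev_rcons -zw diffs_map_addn diffs_rev.
by rewrite perm_rev.
Qed.

Lemma exists_path12 n j : 0 < n -> j <= n - 2 ->
  exists X, perm_eq (0 :: X) (iota 0 n) /\ perm_eq (diffs (0 :: X)) (ms12 (n.-1 - j) j).
Proof.
elim: n j => [|[|n] IHn] j // _ le_jn; first by exists [::]; have -> : j = 0 by lia.
have [lt_jn|ge_jn] := ltnP j n.
  have [X [pX dX]] := IHn j isT ltac:(lia).
  exists (map (addn 1) (0 :: X)); split; first by rewrite iota0S perm_cons perm_map.
  have -> : diffs (0 :: map (addn 1) (0 :: X)) = 1 :: diffs (map (addn 1) (0 :: X)) by [].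
  rewrite diffs_map_addn.
  have -> : n.+2.-1 - j = (n.+1.-1 - j).+1 by lia.
  by rewrite /ms12 /= perm_cons.
have [w zw dz] := @zigzag_ends_diffs n.+2 isT.
exists (rcons w 1); rewrite -rcons_cons -zw perm_zigzag; split=> //.
have -> : j = n by lia.
by rewrite -[n.+2.-1]/n.+1 subSnn; move: dz; rewrite !subSS subn0.
Qed.

Lemma perm_map_subn n : perm_eq (map (subn n.-1) (iota 0 n)) (iota 0 n).
Proof.
apply: uniq_perm; rewrite ?iota_uniq //.
  by rewrite map_inj_in_uniq ?iota_uniq // => x y; rewrite !mem_iota; lia.
move=> x; rewrite mem_iota; apply/mapP/idP => [[y]|lt_xn].
  by rewrite mem_iota => lt_yn ->; lia.
by exists (n.-1 - x); rewrite ?mem_iota; lia.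
Qed.

Definition split_path t s (X Y L : seq nat) :=
  [/\ X != [::], perm_eq (X ++ Y) (iota 0 t), all (fun r => s <= r) X,
      all (fun r => r < s) Y & perm_eq (diffs (X ++ Y)) L].

Lemma split_path_glue {n1 n2 P y0 Q} : 0 < n1 ->
  perm_eq (0 :: P) (iota 0 n2) -> perm_eq (y0 :: Q) (iota 0 n1) ->
  split_path (n1 + n2) n1 (map (addn n1) (rev (0 :: P))) (map (subn n1.-1) (y0 :: Q))
    (absdiff n1 (n1.-1 - y0) :: diffs (0 :: P) ++ diffs (y0 :: Q)).
Proof.
move=> n1_gt0 pP pQ.
have Q_le : all (fun x => x <= n1.-1) (y0 :: Q).
  by apply/allP => x; rewrite (perm_mem pQ) mem_iota; lia.
split.
- by rewrite -size_eq0 size_map size_rev.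
- rewrite iotaD add0n perm_catC; apply: perm_cat.
    exact: perm_trans (perm_map _ pQ) (perm_map_subn _).
  by rewrite -[n1]addn0 iotaDl addn0 perm_map // perm_rev.
- by rewrite all_map; apply/allP => x _ /=; rewrite leq_addr.
- by rewrite all_map; apply/allP => x _ /=; lia.
rewrite diffs_cat -?size_eq0 ?size_map ?size_rev // diffs_map_addn diffs_rev.
rewrite diffs_map_subn // rev_cons map_rcons last_rcons addn0 /= -cat1s.
by rewrite perm_catCA perm_cons perm_cat2r perm_rev.
Qed.

Lemma exists_split_path12 t s b : 4 <= t -> s < t -> 0 < b -> b <= t - 3 ->
  exists X Y, split_path t s X Y (ms12 (t.-1 - b) b).
Proof.
move=> t_ge4 lt_st b_gt0 le_bt.
have [->|s_gt0] := posnP s.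
  have [X [pX dX]] := @exists_path12 t b ltac:(lia) ltac:(lia).
  by exists (0 :: X), [::]; split; rewrite ?cats0 //; apply/allP.
have -> : t = s + (t - s) by lia.
have [le_b|gt_b] := leqP b ((t - s - 2) + (s - 2)).
  pose jP := minn b (t - s - 2); pose jQ := b - jP.
  have [P [pP dP]] := @exists_path12 (t - s) jP ltac:(lia) ltac:(lia).
  have [Q [pQ dQ]] := @exists_path12 s jQ ltac:(lia) ltac:(lia).
  have [X_ne pXY X_hi Y_lo dXY] := split_path_glue s_gt0 pP pQ.
  do 2 eexists; split; try eassumption; apply: perm_trans dXY _.
  have -> : absdiff s (s.-1 - 0) = 1 by rewrite /absdiff; lia.
  have -> : ms12 ((s + (t - s)).-1 - b) b =
            ms12 ((t - s).-1 - jP + (s.-1 - jQ)).+1 (jP + jQ).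
    by congr ms12; rewrite /jQ /jP; lia.
  exact/perm_ms12_cons1/perm_ms12_cat.
have [P zP dP] := @zigzag_ends_diffs (t - s) ltac:(lia).
have [Q zQ dQ] := @zigzag_ends_diffs s ltac:(lia).
have pP : perm_eq (0 :: rcons P 1) (iota 0 (t - s)).
  by rewrite -rcons_cons -zP perm_zigzag.
have pQ : perm_eq (1 :: rev (0 :: Q)) (iota 0 s).
  by rewrite -rev_rcons -zQ perm_rev perm_zigzag.
have [X_ne pXY X_hi Y_lo dXY] := split_path_glue s_gt0 pP pQ.
do 2 eexists; split; try eassumption; apply: perm_trans dXY _.
have -> : absdiff s (s.-1 - 1) = 2 by rewrite /absdiff; lia.
have -> : ms12 ((s + (t - s)).-1 - b) b = ms12 (1 + 1) ((t - s - 2) + (s - 2)).+1.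
  by congr ms12; lia.
rewrite -rcons_cons -rev_rcons -zP -zQ diffs_rev.
by apply/perm_ms12_cons2/perm_ms12_cat; rewrite ?perm_rev.
Qed.

Lemma divnMDl_small q m d : m < d -> (q * d + m) %/ d = q.
Proof. by move=> lt_md; rewrite divnMDl ?divn_small ?addn0 //; lia. Qed.

Lemma diffs_arith r d k n : diffs [seq r + d * i | i <- iota k n] = nseq n.-1 d.
Proof.
elim: n k => [|[|n] IHn] k //; rewrite [iota _ _]/= map_cons diffs_cons IHn mulnS.
by rewrite /absdiff; congr (_ :: _); lia.
Qed.

Section Snake.

Variables t v : nat.

Definition col_height r := (v.-1 - r) %/ t.
Definition column r := [seq r + t * i | i <- iota 0 (col_height r).+1].
Definition col_top r := r + t * col_height r.
Definition ocolumn (up : bool) r := if up then column r else rev (column r).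
Definition col_end (up : bool) r := if up then col_top r else r.

Fixpoint snake up sg := if sg is r :: sg' then ocolumn up r ++ snake (~~ up) sg' else [::].

Fixpoint snake_jumps up sg :=
  if sg is r :: (r' :: _) as sg' then
    absdiff (col_end up r) (col_end up r') :: snake_jumps (~~ up) sg'
  else [::].

Lemma snake_cons up r sg : snake up (r :: sg) = ocolumn up r ++ snake (~~ up) sg.
Proof. by []. Qed.

Lemma snake_jumps_cons2 up r r' sg :
  snake_jumps up [:: r, r' & sg] =
    absdiff (col_end up r) (col_end up r') :: snake_jumps (~~ up) (r' :: sg).
Proof. by []. Qed.

Lemma column_cons r : column r = r :: [seq r + t * i | i <- iota 1 (col_height r)].
Proof. by rewrite /column /= muln0 addn0. Qed.

Lemma column_rcons r :
  column r = rcons [seq r + t * i | i <- iota 0 (col_height r)] (col_top r).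
Proof. by rewrite /column -addn1 iotaD map_cat cats1. Qed.

Lemma ocolumn_neq0 up r : ocolumn up r != [::].
Proof. by rewrite -size_eq0 /ocolumn; case: up; rewrite ?size_rev size_map size_iota. Qed.

Lemma head_ocolumn up r : head 0 (ocolumn up r) = col_end (~~ up) r.
Proof.
case: up; rewrite /ocolumn /col_end; first by rewrite column_cons.
by rewrite column_rcons rev_rcons.
Qed.

Lemma last_ocolumn up r : last 0 (ocolumn up r) = col_end up r.
Proof.
case: up; rewrite /ocolumn /col_end; first by rewrite column_rcons last_rcons.
by rewrite column_cons rev_cons last_rcons.
Qed.

Lemma diffs_ocolumn up r : diffs (ocolumn up r) = nseq (col_height r) t.
Proof.
suff diffs_column : diffs (column r) = nseq (col_height r) t.
  by case: up; rewrite /ocolumn ?diffs_rev diffs_column ?rev_nseq.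
by rewrite /column diffs_arith.
Qed.

Lemma snake_neq0 up r sg : snake up (r :: sg) != [::].
Proof. by rewrite -size_eq0 size_cat addn_eq0 size_eq0 (negPf (ocolumn_neq0 _ _)). Qed.

Lemma head_snake up r sg : head 0 (snake up (r :: sg)) = col_end (~~ up) r.
Proof. by rewrite /= -head_ocolumn; case: (ocolumn up r) (ocolumn_neq0 up r). Qed.

Lemma diffs_snake up sg :
  perm_eq (diffs (snake up sg)) (nseq (sumn (map col_height sg)) t ++ snake_jumps up sg).
Proof.
elim: sg up => [|r [|r' sg] IHsg] up //; first by rewrite /= cats0 diffs_ocolumn addn0 cats0.
rewrite snake_cons diffs_cat ?ocolumn_neq0 ?snake_neq0 // last_ocolumn head_snake negbK.
rewrite diffs_ocolumn snake_jumps_cons2.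
apply/permP => p; move/permP/(_ p): (IHsg (~~ up)).
by rewrite !count_cat !count_nseq /= mulnDr; lia.
Qed.

Lemma size_snake up sg : size (snake up sg) = sumn (map col_height sg) + size sg.
Proof.
elim: sg up => //= r sg IHsg up.
by rewrite size_cat IHsg /ocolumn; case: up; rewrite ?size_rev size_map size_iota; lia.
Qed.

Lemma absdiff_col_end up r r' : col_height r = col_height r' ->
  absdiff (col_end up r) (col_end up r') = absdiff r r'.
Proof. by case: up => // h_eq; rewrite /col_end /col_top h_eq absdiffDr. Qed.

Lemma snake_jumps_same_height h up sg : all (fun r => col_height r == h) sg ->
  snake_jumps up sg = diffs sg.
Proof.
elim: sg up => [|r [|r' sg] IHsg] up //.
rewrite snake_jumps_cons2 diffs_cons => /and3P[/eqP hr /eqP hr' hsg].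
by rewrite absdiff_col_end ?hr ?hr' // IHsg //= hr' eqxx.
Qed.

(* The parity of the starting direction makes the move from X to Y at the bottom. *)
Lemma snake_jumps_two_heights hX hY X Y : X != [::] ->
  all (fun r => col_height r == hX) X -> all (fun r => col_height r == hY) Y ->
  snake_jumps (~~ odd (size X)) (X ++ Y) = diffs (X ++ Y).
Proof.
elim: X => [|x [|x' X] IHX] // _ hXs hYs.
  case: Y hYs {IHX} => // y Y hYs.
  change (snake_jumps false [:: x, y & Y] = diffs [:: x, y & Y]).
  by rewrite snake_jumps_cons2 diffs_cons (snake_jumps_same_height _ _ _ hYs).
move: (hXs) => /and3P[/eqP hx /eqP hx' _].
rewrite !cat_cons snake_jumps_cons2 diffs_cons absdiff_col_end ?hx ?hx' // negbK.
by rewrite -cat_cons -IHX //; move: hXs => /andP[].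
Qed.

Hypothesis t_gt0 : 0 < t.

Lemma mem_column r x : r < t -> r < v -> (x \in column r) = (x < v) && (x %% t == r).
Proof.
move=> lt_rt lt_rv; rewrite /column /col_height.
apply/mapP/andP => [[i]|[lt_xv /eqP xr]].
  rewrite mem_iota add0n ltnS leq_divRL // => le_i ->.
  by rewrite addnC mulnC modnMDl modn_small //; split=> //; lia.
exists (x %/ t); last by rewrite {1}(divn_eq x t) xr mulnC addnC.
by rewrite mem_iota leq0n add0n ltnS leq_divRL //; move: (divn_eq x t); rewrite xr; lia.
Qed.

Lemma column_uniq r : uniq (column r).
Proof.
rewrite map_inj_uniq ?iota_uniq // => i j /addnI/eqP.
by rewrite eqn_pmul2l // => /eqP.
Qed.

Lemma perm_snake up sg :
  t <= v -> perm_eq sg (iota 0 t) -> perm_eq (snake up sg) (iota 0 v).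
Proof.
move=> le_tv psg; apply/allP => x _; apply/eqP.
have -> : count_mem x (snake up sg) = count (fun r => x \in column r) sg.
  elim: sg up {psg} => //= r sg IHsg up.
  rewrite count_cat IHsg /ocolumn.
  by case: up; rewrite ?count_rev count_uniq_mem ?column_uniq.
rewrite (permP psg) count_uniq_mem ?iota_uniq // mem_iota /=.
rewrite (eq_in_count (a2 := fun r => (x < v) && (x %% t == r))); last first.
  by move=> r; rewrite mem_iota => /andP[_ lt_rt]; rewrite mem_column //; lia.
case: ltnP => _ /=; last by rewrite count_pred0.
rewrite (eq_count (a2 := pred1 (x %% t))) => [|r]; last by rewrite eq_sym.
by rewrite count_uniq_mem ?iota_uniq // mem_iota ltn_pmod.
Qed.

Lemma sumn_col_height sg :
  t <= v -> perm_eq sg (iota 0 t) -> sumn (map col_height sg) = v - t.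
Proof.
move=> le_tv psg; have := perm_size (perm_snake true sg le_tv psg).
by rewrite size_snake size_iota (perm_size psg) size_iota; lia.
Qed.

Lemma col_height_lo r : r < v %% t -> col_height r = v %/ t.
Proof.
rewrite /col_height; have := divn_eq v t; have := ltn_pmod v t_gt0.
move: (v %% t) (v %/ t) => m q lt_mt v_eq lt_rm.
by rewrite -(@divnMDl_small q (m.-1 - r) t); [congr divn|]; lia.
Qed.

Lemma col_height_hi r : t <= v -> v %% t <= r < t -> col_height r = (v %/ t).-1.
Proof.
rewrite /col_height => le_tv; have := divn_eq v t; have := ltn_pmod v t_gt0.
have : 0 < v %/ t by rewrite divn_gt0.
move: (v %% t) (v %/ t) => m [//|q] _ lt_mt v_eq /andP[le_mr lt_rt].
by rewrite -(@divnMDl_small q (t + m - r.+1) t); [congr divn|]; nia.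
Qed.

End Snake.

Lemma size_ms12t a b t c : size (ms12t a b t c) = a + b + c.
Proof. by rewrite /ms12t !size_cat !size_nseq addnA. Qed.

Theorem proposition4p1 (t a b c : nat) :
  4 <= t -> ~~ odd t -> 2 <= a -> 0 < b -> 0 < c -> a + b = t - 1 ->
  exists s : seq nat, linear_realization (ms12t a b t c) s.
Proof.
move=> t_ge4 _ a_ge2 b_gt0 c_gt0 ab.
have t_gt0 : 0 < t by lia.
pose v := (a + b + c).+1; have le_tv : t <= v by lia.
have le_bt : b <= t - 3 by lia.
have [X [Y [X_ne pXY X_hi Y_lo dXY]]] :=
  @exists_split_path12 t (v %% t) b t_ge4 (ltn_pmod v t_gt0) b_gt0 le_bt.
exists (snake t v (~~ odd (size X)) (X ++ Y)); split.
  by rewrite size_ms12t; apply: perm_snake.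
apply: perm_trans (diffs_snake _ _ _ _) _.
rewrite (@sumn_col_height t v t_gt0 _ le_tv pXY).
rewrite (snake_jumps_two_heights t v (v %/ t).-1 (v %/ t)) //.
- have -> : v - t = c by lia.
  rewrite (_ : t.-1 - b = a) in dXY; last by lia.
  by rewrite perm_catC /ms12t catA perm_cat2r.
- apply/allP => r r_X; rewrite col_height_hi // (allP X_hi r r_X) /=.
  by have := perm_mem pXY r; rewrite mem_cat r_X mem_iota => /esym/andP[].
- by apply/allP => r r_Y; rewrite col_height_lo // (allP Y_lo r r_Y).
Qed.
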